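(* Fix $k\ge1$. Under the mean-field and homogeneity assumptions, the activation rate of the $k$ key nodes, \[ m_k(t)=\lim_{\Delta\downarrow0}\frac1\Delta\,\mathbb P\{\tau_k\le t+\Delta\mid\tau_k\ge t\}, \] satisfies \[ m_k(t)\approx\lambda(\hat a(t))\,\frac{p_{k-1}(t)}{1-p_k(t)}, \] where $p_j(t)$, $0\le j\le k$, is the probability that the time-inhomogeneous Markov chain on $\{0,\dots,k\}$ started at $0$, with jump rates $i\to i+1$ equal to $(k-i)\lambda(\hat a(t))$ ($0\le i\le k-1$) and $i\to i-1$ equal to $i\mu(\hat a(t))$ ($1\le i\le k-1$), state $k$ absorbing, is in state $j$ at time $t$ (equivalently, the solution of the corresponding Kolmogorov forward equations with $p_0(0)=1$, $p_1(0)=\dots=p_k(0)=0$).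
   Context: A signal network has $n$ aggregated nodes with state $\mathbf X(t)\in\{0,1\}^n$ (1 = active, 0 = passive), all passive at time $0$; nodes $1,\dots,k$ are key nodes, and $\tau_k=\inf\{t\ge0:X_1(t)=\dots=X_k(t)=1\}$. Node $i$ becomes active at rate $\lambda(a_i(t))$ and passive at rate $\mu(a_i(t))$, where $a_i(t)$ is the fraction of active neighbours of $i$, $\lambda$ decreasing and $\mu$ increasing; $\hat a(t)$ is the expected fraction of active nodes at time $t$. Mean-field assumption: all rates replaced by $\lambda(\hat a(t))$ and $\mu(\hat a(t))$. Homogeneity assumption: the sets $S_i=\{z\in\{0,1\}^n:\#\{1\le j\le k:z_j=1\}=i\}$ are aggregated into $k+1$ states of a Markov chain with rates $i\to i+1$: $(k-i)\lambda(\hat a(t))$, $i\to i-1$: $i\mu(\hat a(t))$. $\approx$ denotes equality under these assumptions. *)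

From HB Require Import structures.
From mathcomp Require Import all_boot all_order all_algebra.
From mathcomp Require Import all_classical all_reals all_analysis.
Set Implicit Arguments. Unset Strict Implicit. Unset Printing Implicit Defensive.
Import Order.TTheory GRing.Theory Num.Theory.
Import numFieldNormedType.Exports.
Local Open Scope classical_set_scope.
Local Open Scope ring_scope.

Section Defs.
Variable R : realType.

Definition up_rate (k : nat) (lam : R -> R) (a : R) (i : nat) : R :=
  if (i < k)%N then (k - i)%:R * lam a else 0.

Definition down_rate (k : nat) (mu : R -> R) (a : R) (i : nat) : R :=
  if (0 < i < k)%N then i%:R * mu a else 0.

Definition genQ (k : nat) (lam mu ahat : R -> R) (t : R) : 'M[R]_k.+1 :=
  \matrix_(i, j)
    if (j == i.+1 :> nat) then up_rate k lam (ahat t) i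
    else if (j.+1 == i :> nat) then down_rate k mu (ahat t) i
    else if (i == j) then - (up_rate k lam (ahat t) i + down_rate k mu (ahat t) i)
    else 0.

(* Pst s t is the transition matrix from time s to time t; it solves the
   Kolmogorov forward equation d/dt Pst s t = Pst s t * Q t, Pst s s = 1
   (right derivative at t = s, two-sided derivative for t > s). *)
Definition forward_transition (k : nat) (Q : R -> 'M[R]_k.+1)
    (Pst : R -> R -> 'M[R]_k.+1) : Prop :=
  (forall s, Pst s s = 1%:M) /\
  (forall s t (i j : 'I_k.+1), s <= t ->
     (h^-1 * (Pst s (t + h) i j - Pst s t i j) @[h --> 0^'+]
        --> (Pst s t *m Q t) i j) /\
     (s < t -> h^-1 * (Pst s (t + h) i j - Pst s t i j) @[h --> 0^']
        --> (Pst s t *m Q t) i j)).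

(* Finite-dimensional probability P(X_{t_1}=j_1,...,X_{t_n}=j_n) of a Markov
   chain with transition function Pst, started from state i at time s. *)
Fixpoint fdd_prob (k : nat) (Pst : R -> R -> 'M[R]_k.+1) (s : R) (i : 'I_k.+1)
    (l : seq (R * 'I_k.+1)) : R :=
  match l with
  | [::] => 1
  | (t, j) :: l' => Pst s t i j * fdd_prob Pst t j l'
  end.

(* X is (a version of) the Markov chain with transition function Pst started at
   state 0 at time 0: all its finite-dimensional distributions at ordered times
   0 <= t_1 <= ... <= t_n are given by the transition function. *)
Definition is_markov_chain_from0 d (T : measurableType d) (P : probability T R)
    (k : nat) (Pst : R -> R -> 'M[R]_k.+1) (X : R -> T -> 'I_k.+1) : Prop :=
  forall l : seq (R * 'I_k.+1),
    path (fun a b => a.1 <= b.1) (0, ord0) l ->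
    P [set w | all (fun p => X p.1 w == p.2) l] = (fdd_prob Pst 0 ord0 l)%:E.

(* tau_k = inf { t >= 0 : X_t = k } (state k = "all key nodes active"),
   +oo if never reached. *)
Definition hitting_time (T : Type) (k : nat) (X : R -> T -> 'I_k.+1) (w : T)
  : \bar R :=
  ereal_inf [set t%:E | t in [set t : R | 0 <= t /\ X t w = ord_max]].

End Defs.

(* Write p_j(t) = Pst 0 t 0 j.  State k is absorbing, so almost surely a path
   that is in k at time q is still in k at every later time; with right-constant
   paths this gives P{tau <= s} = p_k(s) and, by continuity of p_k,
   P{tau < t} = p_k(t).  Hence P{t <= tau <= t + D} = p_k(t + D) - p_k(t), whose
   right derivative is (p Q(t))_k = lam(ahat t) p_{k-1}(t) by the forward
   equation, state k - 1 being the only one that feeds state k.  The survival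
   probability 1 - p_k(t) is positive because p_0(t) >= exp(-C t) by Gronwall,
   the exit rates being bounded by C = k (lam 0 + mu 1). *)

From HB Require Import structures.
From mathcomp Require Import all_boot all_order all_algebra.
From mathcomp Require Import all_classical all_reals all_analysis.
From mathcomp Require Import zify lra.
Import Order.TTheory GRing.Theory Num.Theory.
Import numFieldNormedType.Exports.
Local Open Scope classical_set_scope.
Local Open Scope ring_scope.

Section real_functions.
Context {R : realType}.
Implicit Types (f df : R -> R) (s t C L : R).

Lemma diff_quotient_is_derive f t L :
  h^-1 * (f (t + h) - f t) @[h --> 0^'] --> L -> is_derive t 1 f L.
Proof.
move=> fL.
have quotE : (fun h => h^-1 *: ((f \o shift t) (h *: 1) - f t)) =
             (fun h => h^-1 * (f (t + h) - f t)).
  by apply/funext => h /=; rewrite [_%:A]mulr1 (addrC h).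
have df : derivable f t 1 by rewrite /derivable quotE; apply/cvg_ex; exists L.
by apply: DeriveDef => //; rewrite /derive quotE; exact: cvg_lim.
Qed.

Lemma right_diff_quotient_right_cvg f t L :
  h^-1 * (f (t + h) - f t) @[h --> 0^'+] --> L ->
  f (t + h) @[h --> 0^'+] --> f t.
Proof.
move=> fL.
have fE : {near 0^'+, (fun h => f t + h * (h^-1 * (f (t + h) - f t))) =1
                      (fun h => f (t + h))}.
  by near=> h; rewrite mulrA divff ?mul1r ?subrKC.
apply: cvg_trans; first exact: near_eq_cvg fE.
suff : (fun h => f t + h * (h^-1 * (f (t + h) - f t))) @ 0^'+ --> f t + 0 * L.
  by rewrite mul0r addr0.
apply: cvgD; first exact: cvg_cst.
by apply: cvgM => //; apply: cvg_at_right_filter; exact: cvg_id.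
Unshelve. all: end_near. Qed.

Lemma ge0_derive_ndecr f df s :
  (forall t, s < t -> is_derive t 1 f (df t)) ->
  (forall t, s < t -> 0 <= df t) ->
  f (s + h) @[h --> 0^'+] --> f s ->
  forall t, s <= t -> f s <= f t.
Proof.
move=> fdf df_ge0 fs t; rewrite le_eqVlt => /orP[/eqP<-//|st].
have ndecr u v : s < u -> u <= v -> f u <= f v.
  move=> su uv.
  have fdf' x : u <= x -> is_derive x 1 f (df x).
    by move=> ux; apply: fdf; exact: lt_le_trans ux.
  apply: (@ger0_derive1_ndecr _ f u v) => //.
  - by move=> x; rewrite in_itv /= => /andP[/ltW ux _]; have [] := fdf' x ux.
  - move=> x; rewrite in_itv /= => /andP[/ltW ux _].
    have fdfx := fdf' x ux; rewrite derive1E derive_val; apply: df_ge0.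
    exact: lt_le_trans ux.
  - apply: derivable_within_continuous => x; rewrite in_itv/= => /andP[ux _].
    by have [] := fdf' x ux.
apply: (cvgr_to_le fs); near=> h; apply: ndecr.
  by rewrite ltrDl; near: h; exact: nbhs_right_gt.
by rewrite -lerBrDl; apply: ltW; near: h; apply: nbhs_right_lt; rewrite subr_gt0.
Unshelve. all: end_near. Qed.

(* Gronwall: [expR (C x) * f x] has a nonnegative derivative. *)
Lemma gronwall_lower_bound f df C s :
  (forall t, s < t -> is_derive t 1 f (df t)) ->
  (forall t, s < t -> - C * f t <= df t) ->
  f (s + h) @[h --> 0^'+] --> f s ->
  forall t, s <= t -> expR (C * (s - t)) * f s <= f t.
Proof.
move=> fdf df_ge fs t st.
pose e x := expR (C * x).
have de (x : R) : is_derive x 1 e (expR (C * x) * C).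
  apply: is_derive1_comp.
  have -> : ( *%R C) = C \*: (@id R) by apply/funext => y.
  by rewrite -[X in is_derive _ _ _ X]mulr1; apply: is_deriveZ.
suff : e s * f s <= e t * f t.
  by rewrite /e mulrBr expRD expRN mulrAC ler_pdivrMr ?expR_gt0 // [f t * _]mulrC.
apply: (@ge0_derive_ndecr (e * f) (fun x => e x *: df x + f x *: (e x * C)) s) => //.
- by move=> x sx; apply: is_deriveM; exact: fdf.
- move=> x sx; rewrite /GRing.scale /= /e.
  rewrite [f x * _]mulrC -mulrA -mulrDr mulr_ge0 ?expR_ge0 //.
  by have := df_ge x sx; rewrite mulNr -subr_ge0 opprK.
- change ((fun h => e (s + h)) \* (fun h => f (s + h)) @ 0^'+ --> e s * f s).
  apply: cvgM => //; rewrite /e.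
  apply: continuous_cvg; first exact: continuous_expR.
  apply: cvg_at_right_filter.
  suff : (fun h => C * (s + h)) @ 0 --> C * (s + 0) by rewrite addr0.
  by apply: cvgM; [exact: cvg_cst | apply: cvgD; [exact: cvg_cst | exact: cvg_id]].
Qed.

End real_functions.

Lemma negligible_bigcup_countable d (T : sigmaRingType d) (R : realFieldType)
    (mu : {measure set T -> \bar R}) (I : Type) (F : I -> set T) :
  countable [set: I] -> (forall i, mu.-negligible (F i)) ->
  mu.-negligible (\bigcup_i F i).
Proof.
elim/Ppointed: I => I in F *.
  by move=> *; rewrite empty_eq0 bigcup0 //; exact: negligible_set0.
move=> /countable_bijP[B] /ppcard_eqP[f] Fneg.
rewrite (reindex_bigcup f^-1%FUN setT)//=; first exact: negligible_bigcup.
exact: (@subl_surj _ _ B).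
Qed.

Section probability_of_events.
Context {d} {T : measurableType d} {R : realType} (P : probability T R).

Definition pr (A : set T) : R := fine (P A).

Lemma pr_ge0 A : 0 <= pr A.
Proof. by rewrite /pr fine_ge0. Qed.

Lemma pr_le {A B} : measurable A -> measurable B -> A `<=` B -> pr A <= pr B.
Proof.
move=> mA mB AB; have := le_measure P (mem_set mA) (mem_set mB) AB.
by apply: fine_le; rewrite fin_num_measure.
Qed.

Lemma prDI {A B} : measurable A -> measurable B ->
  pr A = pr (A `\` B) + pr (A `&` B).
Proof.
move=> mA mB; rewrite /pr {1}(measureDI P mA mB) fineD // fin_num_measure //.
  exact: measurableD.
exact: measurableI.
Qed.

Lemma prC {A} : measurable A -> pr (~` A) = 1 - pr A.
Proof. by move=> mA; rewrite /pr (probability_setC P mA) fineB ?fin_num_measure. Qed.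

Lemma pr_negligible {A} : measurable A -> P.-negligible A <-> pr A = 0.
Proof.
move=> mA; split => [/(negligibleP _ mA)|prA0]; first by rewrite /pr => ->.
by apply/negligibleP => //; rewrite -[LHS]fineK ?fin_num_measure // -/(pr A) prA0.
Qed.

End probability_of_events.

Lemma mulmx_diag_le {R : numDomainType} {n} (M Q : 'M[R]_n) i j :
  (forall l, l != j -> 0 <= Q l j) -> (forall l, 0 <= M i l) ->
  M i j * Q j j <= (M *m Q) i j.
Proof.
move=> Q_ge0 M_ge0; rewrite [leRHS]mxE (bigD1 j) //= lerDl.
by apply: sumr_ge0 => l lj; rewrite mulr_ge0 ?Q_ge0.
Qed.

Section generator.
Context (R : realType) (k : nat) (lam mu ahat : R -> R).
Local Notation Q := (genQ k lam mu ahat).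

Lemma genQ_max_max t : Q t ord_max ord_max = 0.
Proof.
rewrite /genQ mxE /= ifN_eq; last by lia.
by rewrite ifN_eq ?eqxx /up_rate /down_rate /= ?ltnn ?andbF ?addr0 ?oppr0 //; lia.
Qed.

Hypothesis lam_ge0 : forall x, 0 <= lam x.
Hypothesis mu_ge0 : forall x, 0 <= mu x.

Lemma genQ_offdiag_ge0 t i j : i != j -> 0 <= Q t i j.
Proof.
move=> ij; rewrite /genQ mxE.
case: ifP => _; first by rewrite /up_rate; case: ifP => _ //; apply: mulr_ge0.
case: ifP => _; first by rewrite /down_rate; case: ifP => _ //; apply: mulr_ge0.
by rewrite (negbTE ij).
Qed.

Hypothesis lam_nincr : {in `[0, 1] &, {homo lam : x y / x <= y >-> y <= x}}.
Hypothesis mu_ndecr : {in `[0, 1] &, {homo mu : x y / x <= y}}.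
Hypothesis ahat01 : forall t, 0 <= ahat t <= 1.

(* [ahat t] lies in [0, 1], so [lam (ahat t) <= lam 0] and
   [mu (ahat t) <= mu 1]. *)
Lemma genQ_diag_ge t j : - (k%:R * (lam 0 + mu 1)) <= Q t j j.
Proof.
have /andP[a_ge0 a_le1] := ahat01 t.
rewrite /genQ mxE ifN_eq; last by lia.
rewrite ifN_eq; last by lia.
rewrite eqxx lerN2 mulrDr; apply: lerD.
  rewrite /up_rate; case: ifP => _; last exact: mulr_ge0.
  apply: ler_pM => //; first by rewrite ler_nat; lia.
  by apply: lam_nincr; rewrite ?in_itv /= ?lexx ?ler01.
rewrite /down_rate; case: ifP => jk; last exact: mulr_ge0.
apply: ler_pM => //; first by rewrite ler_nat; lia.
by apply: mu_ndecr; rewrite ?in_itv /= ?lexx ?ler01.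
Qed.

Hypothesis k_gt0 : (1 <= k)%N.

Lemma mulmx_genQ_max (M : 'M[R]_k.+1) t i :
  (M *m Q t) i ord_max = M i (inord k.-1) * lam (ahat t).
Proof.
have km1 : (k.-1 < k.+1)%N by rewrite ltnS leq_pred.
rewrite mxE (bigD1 (inord k.-1)) //= big1 ?addr0.
  congr (_ * _); rewrite /genQ mxE /= inordK // prednK // eqxx /up_rate.
  by rewrite ltn_predL k_gt0 -{1}(prednK k_gt0) subSnn mul1r.
move=> l lk; rewrite /genQ mxE /=.
have lk' : (l : nat) != k.-1.
  by apply: contra lk => /eqP lk; apply/eqP/val_inj; rewrite /= inordK.
rewrite ifN_eq; last by lia.
rewrite ifN_eq; last by have := ltn_ord l; lia.
case: eqP => [lmax|_]; last by rewrite mulr0.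
by rewrite lmax /up_rate /down_rate /= ltnn andbF addr0 oppr0 mulr0.
Qed.

End generator.

Section aggregated_chain.
Context (R : realType) (d : measure_display) (T : measurableType d)
  (P : probability T R) (k : nat) (lam mu ahat : R -> R)
  (Pst : R -> R -> 'M[R]_k.+1) (X : R -> T -> 'I_k.+1).
Hypothesis k_gt0 : (1 <= k)%N.
Hypothesis lam_nincr : {in `[0, 1] &, {homo lam : x y / x <= y >-> y <= x}}.
Hypothesis mu_ndecr : {in `[0, 1] &, {homo mu : x y / x <= y}}.
Hypothesis lam_ge0 : forall x, 0 <= lam x.
Hypothesis mu_ge0 : forall x, 0 <= mu x.
Hypothesis ahat01 : forall t, 0 <= ahat t <= 1.
Hypothesis forward : forward_transition (genQ k lam mu ahat) Pst.
Hypothesis measurable_X : forall t (j : 'I_k.+1), measurable [set w | X t w = j].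
Hypothesis chain : is_markov_chain_from0 P Pst X.
Hypothesis right_constant : forall w (t : R), 0 <= t -> exists2 e : R, 0 < e &
  forall s, t <= s < t + e -> X s w = X t w.

Local Notation Q := (genQ k lam mu ahat).
Local Notation pr := (pr P).
Local Notation absorbed s := [set w | X s w = ord_max].
Local Notation tau := (hitting_time X).

Lemma Pst_refl s i j : Pst s s i j = (i == j)%:R.
Proof. by have [-> _] := forward; rewrite mxE. Qed.

Lemma Pst_is_derive (s t : R) i j : s < t ->
  is_derive t 1 (fun u => Pst s u i j) ((Pst s t *m Q t) i j).
Proof.
move=> st; have [_ /(_ s t i j (ltW st))[_ /(_ st) quot]] := forward.
exact: diff_quotient_is_derive quot.
Qed.

Lemma Pst_right_cvg s i j : Pst s (s + h) i j @[h --> 0^'+] --> Pst s s i j.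
Proof.
have [_ /(_ s s i j (lexx s))[quot _]] := forward.
exact: (@right_diff_quotient_right_cvg _ (fun u => Pst s u i j) s _ quot).
Qed.

Lemma Pst0_continuous (t : R) i j : 0 < t ->
  {for t, continuous (fun u => Pst 0 u i j)}.
Proof.
move=> t_gt0; have [df _] := Pst_is_derive _ _ i j t_gt0.
exact/differentiable_continuous/derivable1_diffP.
Qed.

Lemma prX s j : 0 <= s -> pr [set w | X s w = j] = Pst 0 s ord0 j.
Proof.
move=> s_ge0; have := chain [:: (s, j)]; rewrite /= s_ge0 mulr1 => /(_ isT) chainE.
rewrite /pr -[RHS]/(fine (Pst 0 s ord0 j)%:E) -chainE; congr (fine (P _)).
by apply/seteqP; split => w /=; rewrite andbT => /eqP.
Qed.

Lemma prXI q s i j : 0 <= q -> q <= s ->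
  pr ([set w | X q w = i] `&` [set w | X s w = j]) = Pst 0 q ord0 i * Pst q s i j.
Proof.
move=> q_ge0 qs; have := chain [:: (q, i); (s, j)].
rewrite /= q_ge0 qs mulr1 => /(_ isT) chainE.
rewrite /pr -[RHS]/(fine (Pst 0 q ord0 i * Pst q s i j)%:E) -chainE.
congr (fine (P _)).
apply/seteqP; split => w /=; rewrite andbT; first by move=> [-> ->]; rewrite !eqxx.
by move=> /andP[/eqP -> /eqP ->].
Qed.

Lemma Pst0_ge0 s j : 0 <= s -> 0 <= Pst 0 s ord0 j.
Proof. by move=> s_ge0; rewrite -prX // pr_ge0. Qed.

Lemma Pst_ge0 q s i j : 0 <= q -> q <= s -> 0 < Pst 0 q ord0 i -> 0 <= Pst q s i j.
Proof.
move=> q_ge0 qs Pi; have := pr_ge0 P ([set w | X q w = i] `&` [set w | X s w = j]).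
by rewrite prXI // pmulr_rge0.
Qed.

(* [Pst q u k k] is at most 1 and nondecreasing in [u]: its derivative
   [(Pst q u *m Q u) k k] dominates [Pst q u k k * Q u k k = 0]. *)
Lemma Pst_absorbing q s : 0 <= q -> q <= s -> 0 < Pst 0 q ord0 ord_max ->
  Pst q s ord_max ord_max = 1.
Proof.
move=> q_ge0 qs Pk; apply/le_anti/andP; split.
  rewrite -(ger_pMr _ Pk) -prXI // -prX //.
  by apply: pr_le; [exact: measurableI | exact: measurable_X | exact: subIsetl].
rewrite -[leLHS](_ : Pst q q ord_max ord_max = 1); last by rewrite Pst_refl eqxx.
apply: (@ge0_derive_ndecr _ (fun u => Pst q u ord_max ord_max)
  (fun u => (Pst q u *m Q u) ord_max ord_max)) => //.
- by move=> t; exact: Pst_is_derive.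
- move=> t qt; have := mulmx_diag_le (Pst q t) (Q t) ord_max ord_max.
  rewrite genQ_max_max mulr0; apply; first by move=> l; exact: genQ_offdiag_ge0.
  by move=> l; apply: Pst_ge0 => //; exact: ltW.
- exact: Pst_right_cvg.
Qed.

Lemma pr_absorbedD q s : 0 <= q -> q <= s -> pr (absorbed q `\` absorbed s) = 0.
Proof.
move=> q_ge0 qs; have := prDI P (measurable_X q ord_max) (measurable_X s ord_max).
rewrite prX // prXI //.
have [->|Pk_neq0] := eqVneq (Pst 0 q ord0 ord_max) 0; first by rewrite mul0r; lra.
have Pk_gt0 : 0 < Pst 0 q ord0 ord_max by rewrite lt_def Pk_neq0 Pst0_ge0.
by rewrite Pst_absorbing // mulr1; lra.
Qed.

Lemma Pst00_gt0 t : 0 <= t -> 0 < Pst 0 t ord0 ord0.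
Proof.
move=> t_ge0; have := @gronwall_lower_bound _ (fun u => Pst 0 u ord0 ord0)
  (fun u => (Pst 0 u *m Q u) ord0 ord0) (k%:R * (lam 0 + mu 1)) 0.
move=> /(_ _ _ (Pst_right_cvg 0 ord0 ord0) t t_ge0) lb.
apply: lt_le_trans (lb _ _); first by rewrite Pst_refl eqxx mulr1 expR_gt0.
- by move=> u; exact: Pst_is_derive.
- move=> u u_gt0; apply: le_trans (mulmx_diag_le (Pst 0 u) (Q u) ord0 ord0 _ _).
  + rewrite mulrC; apply: ler_wpM2l; first exact/Pst0_ge0/ltW.
    exact: genQ_diag_ge.
  + by move=> l; exact: genQ_offdiag_ge0.
  + by move=> l; apply: Pst0_ge0; exact: ltW.
Qed.

Lemma Pst0max_lt1 t : 0 <= t -> Pst 0 t ord0 ord_max < 1.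
Proof.
move=> t_ge0.
have : pr [set w | X t w = ord0] <= pr (~` absorbed t).
  apply: (pr_le _ (measurable_X t ord0) (measurableC (measurable_X t ord_max))).
  by move=> w /= -> /(congr1 val) /=; lia.
rewrite prC ?prX //.
by have := Pst00_gt0 _ t_ge0; lra.
Qed.

(* The event [{tau < t}], written as a countable union to make it measurable. *)
Definition hit_before (t : R) : set T :=
  \bigcup_(q in [set q : rat | (0 : R) <= ratr q < t]) absorbed (ratr q).

Lemma measurable_hit_before t : measurable (hit_before t).
Proof.
rewrite /hit_before bigcup_mkcond; apply: bigcupT_measurable_rat => q.
by case: ifP => _ //; exact: measurable_X.
Qed.

Lemma hitting_time_le_absorbed {w} {s : R} :
  0 <= s -> X s w = ord_max -> (tau w <= s%:E)%E.
Proof. by move=> s_ge0 Xs; apply: ereal_inf_lbound; exists s. Qed.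

(* Right-constant paths let a hit at time [r] be moved to a rational time. *)
Lemma hitting_time_ltE t : [set w | (tau w < t%:E)%E] = hit_before t.
Proof.
apply/seteqP; split => w /=; last first.
  move=> [q /= /andP[q_ge0 qt] Xq].
  by apply: le_lt_trans (hitting_time_le_absorbed q_ge0 Xq) _; rewrite lte_fin.
move/ereal_inf_lt => [_ [r [r_ge0 Xr] <-]]; rewrite lte_fin => rt.
have [e e_gt0 Xe] := right_constant w r r_ge0.
have : r < Num.min (r + e) t by rewrite lt_min ltrDl e_gt0 rt.
move/rat_in_itvoo => [q]; rewrite in_itv /= lt_min => /andP[rq /andP[qe qt]].
exists q; first by rewrite /= (le_trans r_ge0 (ltW rq)) qt.
by rewrite /= Xe // (ltW rq) qe.
Qed.

Lemma hitting_time_leE s : 0 <= s ->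
  [set w | (tau w <= s%:E)%E] = absorbed s `|` hit_before s.
Proof.
move=> s_ge0; apply/seteqP; split => w /=; last first.
  case=> [Xs|]; first exact: hitting_time_le_absorbed.
  by rewrite -hitting_time_ltE => /ltW.
move=> tau_le; have [e e_gt0 Xe] := right_constant w s s_ge0.
have : (tau w < (s + e)%:E)%E by apply: le_lt_trans tau_le _; rewrite lte_fin ltrDl.
move/ereal_inf_lt => [_ [r [r_ge0 Xr] <-]]; rewrite lte_fin => rse.
have [sr|rs] := leP s r; first by left; rewrite -(Xe r) ?sr.
right; rewrite -hitting_time_ltE /=.
by apply: le_lt_trans (hitting_time_le_absorbed r_ge0 Xr) _; rewrite lte_fin.
Qed.

Lemma measurable_hitting_time_lt t : measurable [set w | (tau w < t%:E)%E].
Proof. by rewrite hitting_time_ltE; exact: measurable_hit_before. Qed.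

Lemma measurable_hitting_time_le s : 0 <= s ->
  measurable [set w | (tau w <= s%:E)%E].
Proof.
move=> s_ge0; rewrite hitting_time_leE //.
by apply: measurableU; [exact: measurable_X | exact: measurable_hit_before].
Qed.

Lemma pr_hit_beforeD s : 0 <= s -> pr (hit_before s `\` absorbed s) = 0.
Proof.
move=> s_ge0; apply/pr_negligible.
  by apply: measurableD; [exact: measurable_hit_before | exact: measurable_X].
apply: (negligibleS (A := \bigcup_(q : rat)
  if (0 : R) <= ratr q < s then absorbed (ratr q) `\` absorbed s else set0)).
  by move=> w [[q /= qs Xq] Xs]; exists q => //; rewrite qs.
apply: negligible_bigcup_countable => // q.
case: ifP => [/andP[q_ge0 qs]|_]; last exact: negligible_set0.
apply/pr_negligible; first by apply: measurableD; exact: measurable_X.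
by apply: pr_absorbedD => //; exact: ltW.
Qed.

Lemma pr_hitting_time_le s : 0 <= s ->
  pr [set w | (tau w <= s%:E)%E] = Pst 0 s ord0 ord_max.
Proof.
move=> s_ge0; have mU := measurable_hitting_time_le _ s_ge0.
rewrite hitting_time_leE // in mU *.
rewrite (prDI P mU (measurable_X s ord_max)) setDUl setDv set0U.
by rewrite setIidr ?pr_hit_beforeD ?add0r ?prX //; exact: subsetUl.
Qed.

(* Squeezed between [pr {tau <= t - x}] and [pr {tau <= t}], using the
   continuity of [Pst 0 . 0 k] at [t > 0]. *)
Lemma pr_hitting_time_lt t : 0 <= t ->
  pr [set w | (tau w < t%:E)%E] = Pst 0 t ord0 ord_max.
Proof.
move=> t_ge0; have [t_gt0|t_le0] := ltP 0 t; last first.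
  have t0 : t = 0 by apply/le_anti; rewrite t_le0 t_ge0.
  rewrite hitting_time_ltE t0 Pst_refl.
  have -> : hit_before 0 = set0.
    apply/seteqP; split => // w [q /= /andP[q_ge0 q_lt0]].
    by have := le_lt_trans q_ge0 q_lt0; rewrite ltxx.
  have /negbTE -> : ord0 != ord_max :> 'I_k.+1 by rewrite -val_eqE /= eq_sym -lt0n.
  by rewrite /pr measure0.
apply/le_anti/andP; split.
  rewrite -pr_hitting_time_le; last exact: ltW.
  apply: pr_le;
    [exact: measurable_hitting_time_lt | exact/measurable_hitting_time_le/ltW |].
  by move=> w /= /ltW.
have Pk_left : Pst 0 (t - x) ord0 ord_max @[x --> 0^'+] --> Pst 0 t ord0 ord_max.
  apply: (@continuous_cvg _ _ _ _ _ (fun x => t - x)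
    (fun u => Pst 0 u ord0 ord_max)).
    exact: Pst0_continuous.
  apply: cvg_at_right_filter.
  suff : (fun x => t - x) @ 0 --> t - 0 by rewrite subr0.
  by apply: cvgB; [exact: cvg_cst | exact: cvg_id].
apply: (cvgr_to_le Pk_left); near=> x.
have x_gt0 : 0 < x by near: x; exact: nbhs_right_gt.
have xt : x < t by near: x; exact: nbhs_right_lt.
rewrite -pr_hitting_time_le; last by rewrite subr_ge0 ltW.
apply: pr_le; [by apply/measurable_hitting_time_le; rewrite subr_ge0 ltW |
               exact: measurable_hitting_time_lt |].
move=> w /= tau_le; apply: le_lt_trans tau_le _.
by rewrite lte_fin ltrBlDr ltrDl.
Unshelve. all: end_near. Qed.

Lemma pr_hitting_time_ge t : 0 <= t ->
  pr [set w | (t%:E <= tau w)%E] = 1 - Pst 0 t ord0 ord_max.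
Proof.
move=> t_ge0; rewrite -pr_hitting_time_lt // -prC.
  by congr pr; apply/seteqP; split => w /=; rewrite leNgt => /negP.
exact: measurable_hitting_time_lt.
Qed.

Lemma pr_hitting_time_itv t D : 0 <= t -> 0 <= D ->
  pr [set w | (t%:E <= tau w)%E /\ (tau w <= (t + D)%:E)%E] =
  Pst 0 (t + D) ord0 ord_max - Pst 0 t ord0 ord_max.
Proof.
move=> t_ge0 D_ge0; have tD_ge0 : 0 <= t + D by rewrite addr_ge0.
have mle := measurable_hitting_time_le _ tD_ge0.
rewrite -pr_hitting_time_le // -pr_hitting_time_lt //.
rewrite (prDI P mle (measurable_hitting_time_lt t)) setIidr ?addrK.
  congr pr; apply/seteqP; split => w /= [+ +]; split => //.
    by apply/negP; rewrite -leNgt.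
  by rewrite leNgt; apply/negP.
move=> w /= /ltW /le_trans; apply.
by rewrite lee_fin lerDl.
Qed.

Lemma activation_rate t : 0 <= t ->
  (0 < pr [set w | (t%:E <= tau w)%E]) /\
  (Dt^-1 * (pr [set w | (t%:E <= tau w)%E /\ (tau w <= (t + Dt)%:E)%E]
            / pr [set w | (t%:E <= tau w)%E])
     @[Dt --> 0^'+] -->
   lam (ahat t) * pr [set w | X t w = inord k.-1]
     / (1 - pr [set w | X t w = ord_max])).
Proof.
move=> t_ge0; rewrite !prX // pr_hitting_time_ge //.
split; first by rewrite subr_gt0 Pst0max_lt1.
have [_ /(_ 0 t ord0 ord_max t_ge0)[pk_right _]] := forward.
rewrite mulmx_genQ_max // [_ * lam _]mulrC in pk_right.
apply: cvg_trans (near_eq_cvg _)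
  (cvgM pk_right (cvg_cst (1 - Pst 0 t ord0 ord_max)^-1)).
near=> h; have h_ge0 : 0 <= h by near: h; exact: nbhs_right_ge.
by rewrite /= pr_hitting_time_itv // mulrA.
Unshelve. all: end_near. Qed.

End aggregated_chain.

Theorem theorem2 (R : realType) (d : measure_display) (T : measurableType d)
  (P : probability T R) (k : nat) (lam mu ahat : R -> R)
  (Pst : R -> R -> 'M[R]_k.+1) (X : R -> T -> 'I_k.+1) :
  (1 <= k)%N ->
  (* rates: lam decreasing, mu increasing, both nonnegative and continuous;
     ahat a continuous fraction in [0,1] *)
  {in `[0, 1] &, {homo lam : x y / x <= y >-> y <= x}} ->
  {in `[0, 1] &, {homo mu : x y / x <= y}} ->
  (forall x, 0 <= lam x) -> (forall x, 0 <= mu x) ->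
  continuous lam -> continuous mu -> continuous ahat ->
  (forall t, 0 <= ahat t <= 1) ->
  (* X is the aggregated time-inhomogeneous Markov chain, started at 0 *)
  forward_transition (genQ k lam mu ahat) Pst ->
  (forall t (j : 'I_k.+1), measurable [set w | X t w = j]) ->
  is_markov_chain_from0 P Pst X ->
  (* right-continuous (piecewise constant) sample paths *)
  (forall w t, 0 <= t -> exists2 e : R, 0 < e &
      forall s, t <= s < t + e -> X s w = X t w) ->
  forall t : R, 0 <= t ->
    let tau := hitting_time X in
    let p := fun j : 'I_k.+1 => fine (P [set w | X t w = j]) in
    (0 < fine (P [set w | (t%:E <= tau w)%E]))
    /\
    (Dt^-1 * (fine (P [set w | (t%:E <= tau w)%E /\ (tau w <= (t + Dt)%:E)%E])
              / fine (P [set w | (t%:E <= tau w)%E]))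
       @[Dt --> 0^'+]
     --> lam (ahat t) * p (inord k.-1) / (1 - p ord_max)).
Proof.
move=> k_gt0 lam_nincr mu_ndecr lam_ge0 mu_ge0 _ _ _ ahat01 forward mX chain
  right_constant t t_ge0 tau p.
exact: (@activation_rate R d T P k lam mu ahat Pst X k_gt0 lam_nincr mu_ndecr
  lam_ge0 mu_ge0 ahat01 forward mX chain right_constant t t_ge0).
Qed.
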